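(* Let $n\ge1$ and let $\mathcal I^G$ be an imaginarity measure of $n$-mode Gaussian states. Define, for every $n$-mode Gaussian channel $\phi$, $$\mathcal I_s^{GC}(\phi):=\sup_{\rho\in\mathcal{RGS}_n}\mathcal I^G(\phi(\rho)).$$ Then $\mathcal I_s^{GC}$ is an imaginarity measure for Gaussian channels, i.e.: (GC1) $\mathcal I_s^{GC}(\phi)\ge0$ for every $n$-mode Gaussian channel $\phi$, with $\mathcal I_s^{GC}(\phi)=0$ if and only if $\phi$ is a real Gaussian channel; and (GC2) $\mathcal I_s^{GC}(\Phi(\phi))\le\mathcal I_s^{GC}(\phi)$ for every $n$-mode real Gaussian superchannel $\Phi$ and every $n$-mode Gaussian channel $\phi$.
   Context: Consider $n$ bosonic modes, $H=H_1\otimes\cdots\otimes H_n$ with Fock bases, and quadrature operators $\hat Q_k=\hat a_k+\hat a_k^\dagger$, $\hat P_k=-i(\hat a_k-\hat a_k^\dagger)$, $R=(\hat Q_1,\hat P_1,\dots,\hat Q_n,\hat P_n)$. A state $\rho$ is Gaussian with displacement vector $\bar{\mathbf d}_0\in\mathbb R^{2n}$ and covariance matrix $\nu$ (real symmetric $2n\times2n$, $\nu+i\Delta_n\ge0$) if $\mathrm{Tr}(\rho\, e^{iR^{\mathrm T}z})=\exp(-\tfrac12 z^{\mathrm T}\nu z+i\bar{\mathbf d}_0^{\mathrm T}z)$ for all $z\in\mathbb R^{2n}$. A Gaussian state is real if all its matrix entries in the $n$-mode Fock basis are real; $\mathcal{RGS}_n$ denotes the set of real $n$-mode Gaussian states.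 Let $\Delta_n=\bigoplus_{k=1}^n\begin{pmatrix}0&1\\-1&0\end{pmatrix}$, $\Sigma_n=\bigoplus_{k=1}^n\mathrm{diag}(1,-1)$. An $n$-mode Gaussian channel $\phi=\phi(T,N,\mathbf d)$ (real $2n\times2n$ $T$, $N=N^{\mathrm T}\ge0$, $\mathbf d\in\mathbb R^{2n}$, $N+i\Delta_n-iT\Delta_nT^{\mathrm T}\ge0$) maps the Gaussian state with $(\bar{\mathbf d}_0,\nu)$ to the Gaussian state with $(T\bar{\mathbf d}_0+\mathbf d,\ T\nu T^{\mathrm T}+N)$. A Gaussian channel is real if it maps real Gaussian states to real Gaussian states; it is known that this holds iff $d_{2k}=0$, $n_{2k-1,2l}=0$ for all $k,l$, and either $t_{2k,2l-1}=t_{2k,2l}=0$ for all $k,l$ or $t_{2k-1,2l}=t_{2k,2l-1}=0$ for all $k,l$. An $n$-mode Gaussian superchannel $\Phi(A,O,Y,\bar{\mathbf d})$ (real $2n\times 2n$ $A,O,Y$, $Y=Y^{\mathrm T}$, $OO^{\mathrm T}=I$, $Y+i\Delta_n-iA\Delta_nA^{\mathrm T}\ge0$, $i\Delta_n-iO\Delta_nO^{\mathrm T}\ge0$, $\bar{\mathbf d}\in\mathbb R^{2n}$) acts by $\Phi(\phi(T,N,\mathbf d))=\phi(AT\Sigma_nO^{\mathrm T}\Sigma_n,\,ANA^{\mathrm T}+Y,\,A\mathbf d+\bar{\mathbf d})$; equivalently $\Phi(\phi)=\phi_2\circ\phi\circ\phi_1$ with $\phi_1=\phi(\Sigma_nO^{\mathrm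 T}\Sigma_n,0,0)$, $\phi_2=\phi(A,Y,\bar{\mathbf d})$. It is real if it maps real Gaussian channels to real Gaussian channels. An imaginarity measure of $n$-mode Gaussian states is a map $\mathcal I^G$ from $n$-mode Gaussian states to $[0,\infty)$ such that $\mathcal I^G(\rho)=0$ iff $\rho$ is real, and $\mathcal I^G(\phi(\rho))\le\mathcal I^G(\rho)$ for all real Gaussian channels $\phi$ and all Gaussian states $\rho$. *)

From HB Require Import structures.
From mathcomp Require Import all_boot all_order all_algebra.
From mathcomp Require Import complex.
From mathcomp Require Import classical_sets reals constructive_ereal ereal.
Set Implicit Arguments.
Unset Strict Implicit.
Unset Printing Implicit Defensive.
Import Order.TTheory GRing.Theory Num.Theory.
Local Open Scope ring_scope.

Section Gaussian.
Variable R : realType.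
Variable n : nat.
(* phase-space dimension 2n; indices 0..2n-1, index 2k-2 <-> Q_k, 2k-1 <-> P_k *)
Local Notation m := (n.*2).

(* Delta_n = (+)_k [[0,1],[-1,0]] *)
Definition Delta : 'M[R]_m :=
  \matrix_(i, j) (if ~~ odd i && (j == i.+1 :> nat) then 1
                  else if odd i && (j.+1 == i :> nat) then -1 else 0).

Definition Sigma : 'M[R]_m :=
  \matrix_(i, j) (if i == j then (if odd i then -1 else 1) else 0).

Definition cplx (p q : nat) (A : 'M[R]_(p, q)) : 'M[R[i]]_(p, q) :=
  map_mx (fun x => Complex x 0) A.

Definition iC : R[i] := Complex 0 1.

(* positive semidefiniteness of a complex square matrix M:
   v^* M v >= 0 (i.e. real and nonnegative) for every complex vector v *)
Definition psdC (M : 'M[R[i]]_m) : Prop :=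
  forall v : 'cV[R[i]]_m, 0 <= ((map_mx Num.conj v)^T *m M *m v) 0 0.

Definition psdR (M : 'M[R]_m) : Prop :=
  forall v : 'cV[R]_m, 0 <= (v^T *m M *m v) 0 0.

(* The n-mode Gaussian state with displacement d0 and covariance nu
   (its characteristic function being exp(-z^T nu z/2 + i d0^T z)) exists
   iff nu is real symmetric with nu + i Delta_n >= 0. *)
Definition is_gauss_state (d0 : 'cV[R]_m) (nu : 'M[R]_m) : Prop :=
  nu^T = nu /\ psdC (cplx nu + iC *: cplx Delta).

(* Realness of a Gaussian state (all Fock-basis matrix entries real).
   Complex conjugation in the Fock basis fixes Q_k and flips P_k, so the
   state is real iff it is invariant under (d0,nu) |-> (Sigma d0, Sigma nu Sigma),
   i.e. d_{2k} = 0 and nu_{2k-1,2l} = 0 (1-based indices). *)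
Definition real_state (d0 : 'cV[R]_m) (nu : 'M[R]_m) : Prop :=
  (forall i : 'I_m, odd i -> d0 i 0 = 0) /\
  (forall i j : 'I_m, ~~ odd i -> odd j -> nu i j = 0).

Record gchannel := GChannel { chT : 'M[R]_m; chN : 'M[R]_m; chd : 'cV[R]_m }.

Definition is_gauss_channel (phi : gchannel) : Prop :=
  (chN phi)^T = chN phi /\ psdR (chN phi) /\
  psdC (cplx (chN phi) + iC *: cplx Delta
        - iC *: cplx (chT phi *m Delta *m (chT phi)^T)).

Definition ch_disp (phi : gchannel) (d0 : 'cV[R]_m) : 'cV[R]_m :=
  chT phi *m d0 + chd phi.
Definition ch_cov (phi : gchannel) (nu : 'M[R]_m) : 'M[R]_m :=
  chT phi *m nu *m (chT phi)^T + chN phi.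

Definition real_channel (phi : gchannel) : Prop :=
  forall d0 nu, is_gauss_state d0 nu -> real_state d0 nu ->
    real_state (ch_disp phi d0) (ch_cov phi nu).

Record gsuperchannel :=
  GSuper { scA : 'M[R]_m; scO : 'M[R]_m; scY : 'M[R]_m; scd : 'cV[R]_m }.

Definition is_gauss_superchannel (Phi : gsuperchannel) : Prop :=
  (scY Phi)^T = scY Phi /\ scO Phi *m (scO Phi)^T = 1%:M /\
  psdC (cplx (scY Phi) + iC *: cplx Delta
        - iC *: cplx (scA Phi *m Delta *m (scA Phi)^T)) /\
  psdC (iC *: cplx Delta - iC *: cplx (scO Phi *m Delta *m (scO Phi)^T)).

Definition sc_apply (Phi : gsuperchannel) (phi : gchannel) : gchannel :=
  GChannel (scA Phi *m chT phi *m Sigma *m (scO Phi)^T *m Sigma)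
           (scA Phi *m chN phi *m (scA Phi)^T + scY Phi)
           (scA Phi *m chd phi + scd Phi).

Definition real_superchannel (Phi : gsuperchannel) : Prop :=
  forall phi, is_gauss_channel phi -> real_channel phi ->
    real_channel (sc_apply Phi phi).

(* imaginarity measure of n-mode Gaussian states; a Gaussian state is
   identified with its (displacement, covariance) pair, and I is only
   constrained on genuine Gaussian states *)
Definition imag_measure (I : 'cV[R]_m -> 'M[R]_m -> R) : Prop :=
  (forall d0 nu, is_gauss_state d0 nu -> 0 <= I d0 nu) /\
  (forall d0 nu, is_gauss_state d0 nu -> (I d0 nu = 0 <-> real_state d0 nu)) /\
  (forall phi d0 nu, is_gauss_channel phi -> real_channel phi ->
     is_gauss_state d0 nu -> I (ch_disp phi d0) (ch_cov phi nu) <= I d0 nu).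

Definition IsGC (I : 'cV[R]_m -> 'M[R]_m -> R) (phi : gchannel) : \bar R :=
  ereal_sup [set y : \bar R | exists (d0 : 'cV[R]_m) (nu : 'M[R]_m),
              [/\ is_gauss_state d0 nu, real_state d0 nu &
                  y = (I (ch_disp phi d0) (ch_cov phi nu))%:E]]%classic.

End Gaussian.

(* The supremum defining [IsGC] is nonnegative because the vacuum is a real Gaussian state,
   and it vanishes exactly when every real input has a real output, i.e. when the channel is
   real.  For monotonicity write Phi(phi) = phi2 o phi o phi1 with
   phi1 = (Sigma O^T Sigma, 0, 0) and phi2 = (A, Y, dbar).  Feeding Phi the real channels that
   prepare a fixed real state shows that phi2 is real.  Feeding it the real channels with
   T = e_k e_l^T (k, l momentum indices) shows that either the momentum rows of A vanish, so
   every output of Phi(phi) is real and has imaginarity 0, or the orthogonal matrix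
   Sigma O^T Sigma has no position-to-momentum entries, hence none in the other direction
   either, and phi1 preserves realness; then
   I(phi2(phi(phi1 rho))) <= I(phi(phi1 rho)) <= IsGC(phi). *)

From HB Require Import structures.
From mathcomp Require Import all_boot all_order all_algebra.
From mathcomp Require Import complex.
From mathcomp Require Import classical_sets reals constructive_ereal ereal.
Import Order.TTheory GRing.Theory Num.Theory.
Local Open Scope ring_scope.

Set Implicit Arguments.
Unset Strict Implicit.
Unset Printing Implicit Defensive.

Local Notation conjmx A := (map_mx Num.conj A).

Lemma sum_delta (T : pzSemiRingType) q (k : 'I_q) (F : 'I_q -> T) :
  \sum_(c < q) (c == k)%:R * F c = F k.
Proof.
rewrite (bigD1 k) //= eqxx mul1r big1 ?addr0 // => c /negbTE ->.
by rewrite mul0r.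
Qed.

Lemma delta_mul_delta (T : pzRingType) p q r s (i : 'I_p) (j : 'I_q) (j' : 'I_r)
    (k : 'I_s) (A : 'M[T]_(q, r)) :
  delta_mx i j *m A *m delta_mx j' k = A j j' *: delta_mx i k.
Proof.
apply/matrixP => a c; rewrite mxE (bigD1 j') //= big1 => [|b /negbTE b_neq]; last first.
  by rewrite [X in _ * X]mxE b_neq mulr0.
rewrite addr0 mxE (bigD1 j) //= big1 => [|b /negbTE b_neq]; last first.
  by rewrite [X in X * _]mxE b_neq andbF mul0r.
rewrite !mxE !eqxx andbT addr0 /=.
by case: (a == i); case: (c == k); rewrite /= ?mulr1 ?mulr0 ?mul1r ?mul0r.
Qed.

Section Complexification.
Variable R : realType.

Lemma cplxE p q (A : 'M[R]_(p, q)) : cplx A = map_mx (real_complex R) A.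
Proof. by []. Qed.

Lemma cplxM p q r (A : 'M[R]_(p, q)) (B : 'M[R]_(q, r)) :
  cplx (A *m B) = cplx A *m cplx B.
Proof. by rewrite !cplxE map_mxM. Qed.

Lemma cplxT p q (A : 'M[R]_(p, q)) : cplx A^T = (cplx A)^T.
Proof. by rewrite !cplxE map_trmx. Qed.

Lemma cplxD p q (A B : 'M[R]_(p, q)) : cplx (A + B) = cplx A + cplx B.
Proof. by rewrite !cplxE map_mxD. Qed.

Lemma cplxN p q (A : 'M[R]_(p, q)) : cplx (- A) = - cplx A.
Proof. by rewrite !cplxE map_mxN. Qed.

Lemma cplx0 p q : cplx (0 : 'M[R]_(p, q)) = 0.
Proof. by rewrite cplxE map_mx0. Qed.

Lemma cplx1 p : cplx (1%:M : 'M[R]_p) = 1%:M.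
Proof. by rewrite cplxE map_mx1. Qed.

Lemma conjmx_cplx p q (A : 'M[R]_(p, q)) : conjmx (cplx A) = cplx A.
Proof. by apply/matrixP => i j; rewrite !mxE; exact: conjc_real. Qed.

Lemma iC_sqr : iC R * iC R = -1.
Proof. by rewrite -expr2 -[iC R]/('i%C) sqr_i. Qed.

Lemma conj_iC : Num.conj (iC R) = - iC R.
Proof. by rewrite /iC -[Complex 0 1]/('i%C) complexiE conjCi. Qed.

Lemma conjmx_iC_cplx p q (A : 'M[R]_(p, q)) :
  conjmx (iC R *: cplx A) = - (iC R *: cplx A).
Proof.
apply/matrixP => i j; rewrite !mxE rmorphM /= conj_iC mulNr.
by congr (- (_ * _)); exact: conjc_real.
Qed.

Lemma conjtr_mul_ge0 k (w : 'cV[R[i]]_k) : 0 <= ((conjmx w)^T *m w) 0 0.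
Proof.
rewrite mxE; apply: sumr_ge0 => c _; rewrite !mxE mulrC; exact: mul_conjC_ge0.
Qed.

End Complexification.

Section Positivity.
Variables (R : realType) (n : nat).
Local Notation m := n.*2.

Lemma psdC_add (K1 K2 : 'M[R[i]]_m) : psdC K1 -> psdC K2 -> psdC (K1 + K2).
Proof. by move=> h1 h2 v; rewrite mulmxDr mulmxDl mxE addr_ge0. Qed.

Lemma psdC_congruence (B : 'M[R]_m) (K : 'M[R[i]]_m) :
  psdC K -> psdC (cplx B *m K *m (cplx B)^T).
Proof.
move=> K_psd v; have := K_psd ((cplx B)^T *m v).
by rewrite map_mxM -map_trmx conjmx_cplx trmx_mul trmxK !mulmxA.
Qed.

Lemma psdC_psdR (Y K : 'M[R]_m) : psdC (cplx Y + iC R *: cplx K) -> psdR Y.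
Proof.
move=> YK_psd v; have := YK_psd (cplx v).
rewrite conjmx_cplx -cplxT mulmxDr mulmxDl -scalemxAr -scalemxAl -!cplxM.
rewrite mxE [X in _ + X]mxE /cplx !mxE /iC lecE /=.
by rewrite !mul0r mul1r mulr0 subr0 addr0 => /andP[].
Qed.

End Positivity.

Section Symplectic.
Variables (R : realType) (n : nat).
Local Notation m := n.*2.

Definition partner (i : nat) : nat := if odd i then i.-1 else i.+1.

Lemma odd_partner i : odd (partner i) = ~~ odd i.
Proof.
rewrite /partner; case hi: (odd i); last by rewrite /= hi.
by case: i hi => //= i /negbTE.
Qed.

Lemma partnerK : involutive partner.
Proof.
move=> i; rewrite {1}/partner odd_partner /partner; case hi: (odd i) => //=.
by case: i hi.
Qed.

Lemma partner_lt (i : 'I_m) : (partner i < m)%N.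
Proof.
rewrite /partner; case: ifP => hi; first exact: leq_ltn_trans (leq_pred _) (ltn_ord i).
have := ltn_ord i; rewrite leq_eqVlt => /orP[/eqP /(congr1 odd)|] //.
by rewrite odd_double /= hi.
Qed.

Definition partner_ord (i : 'I_m) : 'I_m := Ordinal (partner_lt i).

Lemma partner_ordK : involutive partner_ord.
Proof. by move=> i; apply: val_inj; exact: partnerK. Qed.

Lemma partner_ord_neq (i : 'I_m) : i != partner_ord i.
Proof.
by apply/eqP => /(congr1 (odd \o val)) /=; rewrite odd_partner; case: (odd i).
Qed.

Lemma DeltaE (i j : 'I_m) : Delta R n i j = (j == partner_ord i)%:R * (-1) ^+ odd i.
Proof.
rewrite mxE -val_eqE /= /partner; case: (nat_of_ord i) => [|i'] /=.
  by case: eqP; rewrite /= ?mul1r ?mul0r.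
rewrite eqSS; case: (odd i') => /=; case: eqP; rewrite /= ?mul1r ?mul0r //.
Qed.

Lemma Delta_sqr : Delta R n *m Delta R n = - 1%:M.
Proof.
apply/matrixP => i j; rewrite !mxE.
under eq_bigr => c _ do rewrite DeltaE mulrAC -mulrA.
rewrite sum_delta DeltaE partner_ordK /= odd_partner signrN mulrN mulNr -mulrA.
by rewrite -expr2 sqrr_sign mulr1 eq_sym.
Qed.

Lemma tr_Delta : (Delta R n)^T = - Delta R n.
Proof.
apply/matrixP => i j; rewrite mxE [RHS]mxE !DeltaE.
have [->|ne] := eqVneq j (partner_ord i).
  by rewrite partner_ordK eqxx /= odd_partner signrN mulrN.
have -> : (i == partner_ord j) = false.
  by apply: contraNF ne => /eqP ->; rewrite partner_ordK.
by rewrite !mul0r oppr0.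
Qed.

Lemma SigmaE : Sigma R n = diag_mx (\row_(i < m) (-1) ^+ odd i).
Proof.
apply/matrixP => i j; rewrite !mxE.
by case: (i == j); rewrite ?mulr1n ?mulr0n //; case: (odd i).
Qed.

Lemma Sigma_sqr : Sigma R n *m Sigma R n = 1%:M.
Proof.
rewrite SigmaE mulmx_diag -diag_const_mx; congr diag_mx.
by apply/rowP => i; rewrite !mxE -expr2 sqrr_sign.
Qed.

Lemma tr_Sigma : (Sigma R n)^T = Sigma R n.
Proof. by rewrite SigmaE tr_diag_mx. Qed.

Lemma Sigma_Delta_Sigma : Sigma R n *m Delta R n *m Sigma R n = - Delta R n.
Proof.
rewrite SigmaE mul_diag_mx mul_mx_diag; apply/matrixP => i j.
rewrite mxE [X in X * _]mxE [RHS]mxE DeltaE !mxE.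
have [->|_] := eqVneq j (partner_ord i); last first.
  by rewrite !(mul0r, mulr0) oppr0.
by rewrite /= odd_partner signrN !mul1r -expr2 sqrr_sign mul1r.
Qed.

End Symplectic.

Section GaussianStates.
Variables (R : realType) (n : nat).
Local Notation m := n.*2.

(* [B = 1 + i Delta] is Hermitian with [B *m B = 2 B], so [B = B^* B / 2]. *)
Lemma psdC_vacuum : psdC (cplx (1%:M : 'M[R]_m) + iC R *: cplx (Delta R n)).
Proof.
move=> v; rewrite cplx1.
set D := cplx (Delta R n); set B := 1%:M + iC R *: D.
have DD : D *m D = - 1%:M by rewrite /D -cplxM Delta_sqr cplxN cplx1.
have B_herm : (conjmx B)^T = B.
  rewrite /B map_mxD map_mx1 conjmx_iC_cplx linearD /= trmx1 linearN /= linearZ /=.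
  by rewrite /D -cplxT tr_Delta cplxN scalerN opprK.
have BB : B *m B = 2%:R *: B.
  rewrite {1}/B mulmxDl mul1mx -scalemxAl /B mulmxDr mulmx1 -scalemxAr DD.
  rewrite scalerDr scalerA iC_sqr scaleN1r opprK [iC R *: D + _]addrC.
  by rewrite scaler_nat mulr2n.
have := conjtr_mul_ge0 (B *m v).
rewrite map_mxM trmx_mul -!mulmxA (mulmxA (conjmx B)^T) B_herm BB -scalemxAl.
by rewrite -scalemxAr mxE !mulmxA pmulr_rge0 // ltr0n.
Qed.

Lemma is_gauss_state_unit (d : 'cV[R]_m) : is_gauss_state d 1%:M.
Proof. by split; [exact: trmx1 | exact: psdC_vacuum]. Qed.

Lemma is_gauss_state_channel (phi : gchannel R n) d nu :
  is_gauss_channel phi -> is_gauss_state d nu ->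
  is_gauss_state (ch_disp phi d) (ch_cov phi nu).
Proof.
case: phi => T N d' [/= N_sym [_ N_psd]] [nu_sym nu_psd]; rewrite /ch_cov /=; split.
  by rewrite linearD /= !trmx_mul trmxK nu_sym mulmxA N_sym.
have -> : cplx (T *m nu *m T^T + N) + iC R *: cplx (Delta R n) =
    cplx T *m (cplx nu + iC R *: cplx (Delta R n)) *m (cplx T)^T +
    (cplx N + iC R *: cplx (Delta R n) - iC R *: cplx (T *m Delta R n *m T^T)).
  rewrite mulmxDr mulmxDl -scalemxAr -scalemxAl -cplxT -!cplxM cplxD.
  by rewrite addrACA subrr addr0 addrA.
exact: psdC_add (psdC_congruence T nu_psd) N_psd.
Qed.

Lemma prep_channel_gauss (d : 'cV[R]_m) nu :
  is_gauss_state d nu -> is_gauss_channel (GChannel 0 nu d).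
Proof.
case=> nu_sym nu_psd; split=> //; split; first exact: psdC_psdR nu_psd.
by rewrite /= !mul0mx cplx0 scaler0 subr0.
Qed.

Lemma delta_channel_gauss (k l : 'I_m) :
  is_gauss_channel (GChannel (delta_mx k l : 'M[R]_m) 1%:M 0).
Proof.
have ETE : delta_mx k l *m Delta R n *m (delta_mx k l)^T = 0.
  rewrite trmx_delta delta_mul_delta DeltaE.
  by rewrite (negbTE (partner_ord_neq l)) mul0r scale0r.
split; first exact: trmx1.
split; first exact: psdC_psdR psdC_vacuum.
by rewrite /= ETE cplx0 scaler0 subr0; exact: psdC_vacuum.
Qed.

End GaussianStates.

Arguments delta_channel_gauss {R n}.

Section RealStates.
Variables (R : realType) (n : nat).
Local Notation m := n.*2.

(* Even indices are the positions Q_k, odd ones the momenta P_k. *)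
Definition PQ_block0 (M : 'M[R]_m) : Prop :=
  forall i j : 'I_m, odd i -> ~~ odd j -> M i j = 0.

Definition QP_block0 (M : 'M[R]_m) : Prop :=
  forall i j : 'I_m, ~~ odd i -> odd j -> M i j = 0.

Definition P_rows0 (M : 'M[R]_m) : Prop := forall i j : 'I_m, odd i -> M i j = 0.

Lemma PQ_block0_0 : PQ_block0 0.
Proof. by move=> i j _ _; rewrite mxE. Qed.

Lemma QP_block0_0 : QP_block0 0.
Proof. by move=> i j _ _; rewrite mxE. Qed.

Lemma real_state_unit (d : 'cV[R]_m) :
  (forall i : 'I_m, odd i -> d i 0 = 0) -> real_state d 1%:M.
Proof.
move=> d_real; split=> // i j i_even j_odd; rewrite mxE.
by case: eqP => [eq_ij|]; [move: i_even; rewrite eq_ij j_odd | rewrite mulr0n].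
Qed.

Lemma vacuum_real : real_state (0 : 'cV[R]_m) 1%:M.
Proof. by apply: real_state_unit => i _; rewrite mxE. Qed.

Lemma real_state_delta (k : 'I_m) : ~~ odd k -> real_state (delta_mx k 0 : 'cV[R]_m) 1%:M.
Proof.
move=> k_even; apply: real_state_unit => i i_odd; rewrite mxE.
by case: eqP => [eq_ik|]; [move: k_even; rewrite -eq_ik i_odd | rewrite mulr0n].
Qed.

Lemma real_state_add (d d' : 'cV[R]_m) nu nu' :
  real_state d nu -> real_state d' nu' -> real_state (d + d') (nu + nu').
Proof.
move=> [d_real nu_real] [d'_real nu'_real]; split=> [i i_odd | i j i_even j_odd].
  by rewrite mxE d_real // d'_real // addr0.
by rewrite mxE nu_real // nu'_real // addr0.
Qed.

Lemma real_state_mulmx (M : 'M[R]_m) d nu :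
  PQ_block0 M -> QP_block0 M -> real_state d nu -> real_state (M *m d) (M *m nu *m M^T).
Proof.
move=> M_PQ M_QP [d_real nu_real]; split=> [l l_odd | i j i_even j_odd].
  rewrite mxE big1 // => c _.
  by case: (boolP (odd c)) => c_par; [rewrite d_real // mulr0 | rewrite M_PQ // mul0r].
rewrite mxE big1 // => c _; rewrite !mxE.
case: (boolP (odd c)) => c_par; last by rewrite M_PQ // mulr0.
rewrite big1 ?mul0r // => e _.
by case: (boolP (odd e)) => e_par; [rewrite M_QP // mul0r | rewrite nu_real // mulr0].
Qed.

Lemma real_channel_blocks (T N : 'M[R]_m) d :
  PQ_block0 T -> QP_block0 T -> real_state d N -> real_channel (GChannel T N d).
Proof.
move=> T_PQ T_QP dN_real d0 nu0 _ real0.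
exact: real_state_add (real_state_mulmx T_PQ T_QP real0) dN_real.
Qed.

(* Compare the Q-row norms of [M] with its Q-column norms: since [PQ_block0 M], the
   Q columns only meet Q rows, so the QP entries contribute nothing. *)
Lemma orthogonal_QP_block0 (M : 'M[R]_m) :
  M *m M^T = 1%:M -> M^T *m M = 1%:M -> PQ_block0 M -> QP_block0 M.
Proof.
move=> MMT MTM M_PQ.
pose Q := fun i : 'I_m => ~~ odd i.
have row_norm i : \sum_a M i a ^+ 2 = 1.
  by have := congr1 (fun X : 'M[R]_m => X i i) MMT; rewrite !mxE eqxx mulr1n => <-;
    apply: eq_bigr => a _; rewrite mxE expr2.
have col_norm j : \sum_a M a j ^+ 2 = 1.
  by have := congr1 (fun X : 'M[R]_m => X j j) MTM; rewrite !mxE eqxx mulr1n => <-;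
    apply: eq_bigr => a _; rewrite mxE expr2.
have Q_rows : \sum_(i < m | Q i) \sum_a M i a ^+ 2 =
    \sum_(i < m | Q i) \sum_(a < m | Q a) M i a ^+ 2 +
    \sum_(i < m | Q i) \sum_(a < m | odd a) M i a ^+ 2.
  rewrite -big_split /=; apply: eq_bigr => i _; rewrite (bigID Q) /=.
  by congr (_ + _); apply: eq_bigl => a; rewrite /Q negbK.
have Q_cols : \sum_(j < m | Q j) \sum_a M a j ^+ 2 =
    \sum_(i < m | Q i) \sum_(a < m | Q a) M i a ^+ 2.
  transitivity (\sum_(j < m | Q j) \sum_(a < m | Q a) M a j ^+ 2); last exact: exchange_big.
  apply: eq_bigr => j j_even; rewrite (bigID Q) /= [X in _ + X]big1 ?addr0 // => a.
  by rewrite /Q negbK => a_odd; rewrite M_PQ // expr0n.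
have QP_norm0 : \sum_(i < m | Q i) \sum_(a < m | odd a) M i a ^+ 2 = 0.
  apply: (addrI (\sum_(i < m | Q i) \sum_(a < m | Q a) M i a ^+ 2)).
  rewrite addr0 -Q_rows -Q_cols.
  by rewrite (eq_bigr _ (fun i _ => row_norm i)) (eq_bigr _ (fun j _ => col_norm j)).
move=> i a i_even a_odd; apply/eqP; rewrite -sqrf_eq0; apply/eqP.
have row_i :=
  psumr_eq0P (fun i _ => sumr_ge0 _ (fun a _ => sqr_ge0 (M i a))) QP_norm0 i_even.
exact: (psumr_eq0P (fun a _ => sqr_ge0 (M i a)) row_i a_odd).
Qed.

Lemma real_state_P_rows0 (A Y : 'M[R]_m) db x X x' X' :
  P_rows0 A -> real_state (A *m x + db) (A *m X *m A^T + Y) ->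
  real_state (A *m x' + db) (A *m X' *m A^T + Y).
Proof.
move=> A_P [d_real nu_real].
have A_rows0 p (B : 'M[R]_(m, p)) (i : 'I_m) (c : 'I_p) : odd i -> (A *m B) i c = 0.
  by move=> i_odd; rewrite mxE big1 // => b _; rewrite A_P // mul0r.
have AT_cols0 (B : 'M[R]_m) (i j : 'I_m) : odd j -> (B *m A^T) i j = 0.
  by move=> j_odd; rewrite mxE big1 // => b _; rewrite [A^T _ _]mxE A_P // mulr0.
split=> [i i_odd | i j i_even j_odd].
  by rewrite mxE A_rows0 // add0r; have := d_real i i_odd; rewrite mxE A_rows0 // add0r.
rewrite mxE AT_cols0 // add0r.
by have := nu_real i j i_even j_odd; rewrite mxE AT_cols0 // add0r.
Qed.

End RealStates.

Arguments PQ_block0_0 {R n}.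
Arguments QP_block0_0 {R n}.
Arguments vacuum_real {R n}.
Arguments real_state_delta {R n k}.

Section Superchannels.
Variables (R : realType) (n : nat).
Local Notation m := n.*2.

Definition sc_pre (Phi : gsuperchannel R n) : gchannel R n :=
  GChannel (Sigma R n *m (scO Phi)^T *m Sigma R n) 0 0.

Definition sc_post (Phi : gsuperchannel R n) : gchannel R n :=
  GChannel (scA Phi) (scY Phi) (scd Phi).

Lemma sc_apply_disp Phi phi d : ch_disp (sc_apply Phi phi) d =
  ch_disp (sc_post Phi) (ch_disp phi (ch_disp (sc_pre Phi) d)).
Proof. by rewrite /ch_disp /= addr0 mulmxDr addrA !mulmxA. Qed.

Lemma sc_apply_cov Phi phi nu : ch_cov (sc_apply Phi phi) nu =
  ch_cov (sc_post Phi) (ch_cov phi (ch_cov (sc_pre Phi) nu)).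
Proof. by rewrite /ch_cov /= addr0 mulmxDr mulmxDl addrA !trmx_mul !mulmxA. Qed.

Lemma sc_pre_orthogonal Phi : scO Phi *m (scO Phi)^T = 1%:M ->
  let M := chT (sc_pre Phi) in M *m M^T = 1%:M /\ M^T *m M = 1%:M.
Proof.
move=> OOT; have OTO := mulmx1C OOT.
rewrite /= !trmx_mul trmxK tr_Sigma -!mulmxA; split;
  rewrite (mulmxA (Sigma R n) (Sigma R n)) Sigma_sqr mul1mx.
  by rewrite (mulmxA (scO Phi)^T) OTO mul1mx Sigma_sqr.
by rewrite (mulmxA (scO Phi)) OOT mul1mx Sigma_sqr.
Qed.

Lemma sc_pre_gauss Phi : is_gauss_superchannel Phi -> is_gauss_channel (sc_pre Phi).
Proof.
case=> _ [OOT [_ O_psd]]; have OTO := mulmx1C OOT.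
split; first by rewrite trmx0.
split; first by move=> v; rewrite mulmx0 mul0mx mxE.
set B := Sigma R n *m (scO Phi)^T.
have BSDSB :
    B *m Sigma R n *m Delta R n *m (B *m Sigma R n)^T = - (B *m Delta R n *m B^T).
  rewrite trmx_mul tr_Sigma !mulmxA -(mulmxA B) -(mulmxA B) Sigma_Delta_Sigma.
  by rewrite mulmxN mulNmx.
have BODOB : B *m (scO Phi *m Delta R n *m (scO Phi)^T) *m B^T = - Delta R n.
  rewrite /B trmx_mul trmxK tr_Sigma !mulmxA -(mulmxA _ (scO Phi)^T) OTO mulmx1.
  by rewrite -(mulmxA _ (scO Phi)^T) OTO mulmx1 Sigma_Delta_Sigma.
rewrite /= BSDSB cplx0 add0r cplxN scalerN opprK.
have -> : iC R *: cplx (Delta R n) + iC R *: cplx (B *m Delta R n *m B^T) =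
    cplx B *m (iC R *: cplx (Delta R n) - iC R *: cplx (scO Phi *m Delta R n *m (scO Phi)^T))
      *m (cplx B)^T.
  rewrite mulmxBr mulmxBl -!scalemxAr -!scalemxAl -cplxT -!cplxM BODOB.
  by rewrite cplxN scalerN opprK addrC.
exact: psdC_congruence O_psd.
Qed.

Lemma sc_post_gauss Phi : is_gauss_superchannel Phi -> is_gauss_channel (sc_post Phi).
Proof.
case=> Y_sym [_ [AY_psd _]]; split=> //; split=> //.
apply: (@psdC_psdR _ _ _ (Delta R n - scA Phi *m Delta R n *m (scA Phi)^T)).
by rewrite cplxD cplxN scalerDr scalerN addrA.
Qed.

Section RealSuperchannel.
Variable Phi : gsuperchannel R n.
Hypothesis Phi_real : real_superchannel Phi.

Lemma sc_post_real : real_channel (sc_post Phi).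
Proof.
move=> d nu d_nu_gauss d_nu_real.
have := Phi_real (prep_channel_gauss d_nu_gauss)
  (real_channel_blocks PQ_block0_0 QP_block0_0 d_nu_real)
  (is_gauss_state_unit 0) vacuum_real.
by rewrite sc_apply_disp sc_apply_cov /ch_disp /ch_cov /= !mul0mx !add0r.
Qed.

Lemma sc_d_real (p : 'I_m) : odd p -> scd Phi p 0 = 0.
Proof.
move=> p_odd; have := (sc_post_real (is_gauss_state_unit 0) vacuum_real).1 p p_odd.
by rewrite /ch_disp mulmx0 add0r.
Qed.

Lemma sc_A_PQ_block0 : PQ_block0 (scA Phi).
Proof.
move=> p k p_odd k_even.
have := (sc_post_real (is_gauss_state_unit _) (real_state_delta k_even)).1 p p_odd.
by rewrite /ch_disp /= -colE mxE sc_d_real // addr0 mxE.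
Qed.

Lemma scA_PP_mul_pre_PQ (p k l j : 'I_m) : odd p -> odd k -> odd l -> ~~ odd j ->
  scA Phi p k * chT (sc_pre Phi) l j = 0.
Proof.
move=> p_odd k_odd l_odd j_even.
have E_real : real_channel (GChannel (delta_mx k l : 'M[R]_m) 1%:M 0).
  apply: real_channel_blocks vacuum_real.
    move=> a b _ b_even; rewrite mxE.
    have b_neq_l : b != l by apply: contraNneq b_even => ->.
    by rewrite (negbTE b_neq_l) andbF.
  move=> a b a_even _; rewrite mxE.
  have a_neq_k : a != k by apply: contraNneq a_even => ->.
  by rewrite (negbTE a_neq_k).
have := (Phi_real (delta_channel_gauss k l) E_real (is_gauss_state_unit _)
  (real_state_delta j_even)).1 p p_odd.
rewrite sc_apply_disp /ch_disp /= !addr0 [X in X = 0 -> _]mxE sc_d_real // addr0.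
by rewrite (mulmxA (delta_mx k l)) delta_mul_delta -scalemxAr -colE !mxE mulrC.
Qed.

Lemma real_superchannel_cases : P_rows0 (scA Phi) \/ PQ_block0 (chT (sc_pre Phi)).
Proof.
case: (boolP [exists p : 'I_m, exists k : 'I_m, [&& odd p, odd k & scA Phi p k != 0]]).
  case/existsP => p /existsP [k /and3P [p_odd k_odd /negPf Apk_neq0]].
  right => l j l_odd j_even; apply/eqP.
  have /eqP := scA_PP_mul_pre_PQ p_odd k_odd l_odd j_even.
  by rewrite mulf_eq0 Apk_neq0.
move=> no_PP; left => p k p_odd; case: (boolP (odd k)) => k_par; last first.
  exact: sc_A_PQ_block0.
apply/eqP; apply: contraNT no_PP => Apk_neq0.
by apply/existsP; exists p; apply/existsP; exists k; rewrite p_odd k_par Apk_neq0.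
Qed.

End RealSuperchannel.

End Superchannels.

Section ImaginarityMeasure.
Variables (R : realType) (n : nat).
Local Notation m := n.*2.
Variable I : 'cV[R]_m -> 'M[R]_m -> R.
Hypothesis I_measure : imag_measure I.

Lemma IsGC_ubound (phi : gchannel R n) d nu :
  is_gauss_state d nu -> real_state d nu ->
  ((I (ch_disp phi d) (ch_cov phi nu))%:E <= IsGC I phi)%E.
Proof. by move=> d_nu_gauss d_nu_real; apply: ereal_sup_ubound; exists d, nu. Qed.

Lemma IsGC_ge0 (phi : gchannel R n) : is_gauss_channel phi -> (0 <= IsGC I phi)%E.
Proof.
move=> phi_gauss; have [I_ge0 _] := I_measure.
apply: le_trans (IsGC_ubound phi (is_gauss_state_unit 0) vacuum_real).
by rewrite lee_fin I_ge0 //; apply: is_gauss_state_channel phi_gauss (is_gauss_state_unit 0).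
Qed.

Lemma IsGC_eq0 (phi : gchannel R n) :
  is_gauss_channel phi -> IsGC I phi = 0%E <-> real_channel phi.
Proof.
move=> phi_gauss; have [I_ge0 [I_eq0 _]] := I_measure.
split => [IsGC0 d nu d_nu_gauss d_nu_real | phi_real].
  have out_gauss := is_gauss_state_channel phi_gauss d_nu_gauss.
  have := IsGC_ubound phi d_nu_gauss d_nu_real; rewrite IsGC0 lee_fin => I_le0.
  by apply/(I_eq0 _ _ out_gauss)/le_anti; rewrite I_le0 I_ge0.
apply/le_anti; rewrite IsGC_ge0 // andbT.
apply: ge_ereal_sup => _ [d [nu [d_nu_gauss d_nu_real ->]]].
have out_real := phi_real _ _ d_nu_gauss d_nu_real.
by rewrite lee_fin (I_eq0 _ _ (is_gauss_state_channel phi_gauss d_nu_gauss)).2.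
Qed.

Lemma IsGC_sc_apply (Phi : gsuperchannel R n) (phi : gchannel R n) :
  is_gauss_superchannel Phi -> real_superchannel Phi -> is_gauss_channel phi ->
  (IsGC I (sc_apply Phi phi) <= IsGC I phi)%E.
Proof.
move=> Phi_gauss Phi_real phi_gauss; have [_ [I_eq0 I_mono]] := I_measure.
have pre_gauss := sc_pre_gauss Phi_gauss.
apply: ge_ereal_sup => _ [d [nu [d_nu_gauss d_nu_real ->]]].
rewrite sc_apply_disp sc_apply_cov.
set d1 := ch_disp (sc_pre Phi) d; set nu1 := ch_cov (sc_pre Phi) nu.
have d1_nu1_gauss : is_gauss_state d1 nu1 := is_gauss_state_channel pre_gauss d_nu_gauss.
have mid_gauss := is_gauss_state_channel phi_gauss d1_nu1_gauss.
case: (real_superchannel_cases Phi_real) => [A_P | pre_PQ].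
  have out_gauss := is_gauss_state_channel (sc_post_gauss Phi_gauss) mid_gauss.
  have out_real : real_state (ch_disp (sc_post Phi) (ch_disp phi d1))
      (ch_cov (sc_post Phi) (ch_cov phi nu1)).
    (* With zero momentum rows in [A], realness of an output of phi2 does not depend on
       the input, so compare with the output on the vacuum. *)
    have := sc_post_real Phi_real (is_gauss_state_unit 0) vacuum_real.
    exact: real_state_P_rows0.
  rewrite ((I_eq0 _ _ out_gauss).2 out_real).
  exact: IsGC_ge0.
have [MMT MTM] := sc_pre_orthogonal Phi_gauss.2.1.
have pre_real : real_channel (sc_pre Phi).
  apply: real_channel_blocks pre_PQ (orthogonal_QP_block0 MMT MTM pre_PQ) _.
  by split=> *; rewrite mxE.
apply: le_trans (IsGC_ubound phi d1_nu1_gauss (pre_real _ _ d_nu_gauss d_nu_real)).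
rewrite lee_fin; exact: I_mono (sc_post_gauss Phi_gauss) (sc_post_real Phi_real) mid_gauss.
Qed.

End ImaginarityMeasure.

Theorem theorem3 (R : realType) (n : nat) (hn : (1 <= n)%N)
  (I : 'cV[R]_(n.*2) -> 'M[R]_(n.*2) -> R) (hI : imag_measure I) :
  (* (GC1) *)
  (forall phi : gchannel R n, is_gauss_channel phi ->
     (0 <= IsGC I phi)%E /\ (IsGC I phi = 0%E <-> real_channel phi)) /\
  (* (GC2) *)
  (forall (Phi : gsuperchannel R n) (phi : gchannel R n),
     is_gauss_superchannel Phi -> real_superchannel Phi ->
     is_gauss_channel phi ->
     (IsGC I (sc_apply Phi phi) <= IsGC I phi)%E).
Proof.
split=> [phi phi_gauss | Phi phi]; first by split; [exact: IsGC_ge0 | exact: IsGC_eq0].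
exact: IsGC_sc_apply.
Qed.
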